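(* Let $f:\mathbb{F}_2^{\,n}\to\mathbb{R}$, $s\ge1$, $0<\epsilon\le 1/2$, and let $d$ satisfy $2^d=\frac{2s}{\epsilon^4}$. Let $H\le\mathbb{F}_2^{\,n}$ be a uniformly random subspace of codimension $d$. Let $\mathcal E_1\ge\mathcal E_2\ge\dots\ge\mathcal E_{2^n}$ be the energies $\hat f(\alpha)^2$ of the $2^n$ Fourier coefficients of $f$ in non-increasing order, and let $y_1\ge y_2\ge\dots\ge y_{2^d}$ be the energies of the $2^d$ cosets of $H$ in non-increasing order. Then $$\Pr_H\left[\sum_{i=1}^s (y_i-\mathcal E_i)\le 5\epsilon^2\|f\|_2^2\right]\ge\frac{15}{16}.$$
   Context: $\hat f(\alpha)=\frac{1}{2^n}\sum_x f(x)(-1)^{\alpha\cdot x}$, $\|f\|_2^2=\frac{1}{2^n}\sum_xf(x)^2$. The energy of a coset $a+H$ is $\sum_{\beta\in a+H}\hat f(\beta)^2$. *)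

From HB Require Import structures.
From mathcomp Require Import all_boot all_order all_algebra all_fingroup.
Set Implicit Arguments. Unset Strict Implicit. Unset Printing Implicit Defensive.
Import Order.TTheory GRing.Theory Num.Theory.
Local Open Scope ring_scope.

Definition dotF2 (n : nat) (a x : 'rV['F_2]_n) : 'F_2 := (a *m x^T) 0 0.

Definition chr (R : nzRingType) (n : nat) (a x : 'rV['F_2]_n) : R :=
  if dotF2 a x == 0 then 1 else -1.

Definition fourier (R : fieldType) (n : nat) (f : 'rV['F_2]_n -> R)
  (a : 'rV['F_2]_n) : R :=
  (2 ^+ n)^-1 * \sum_(x : 'rV['F_2]_n) f x * chr R a x.

Definition norm2sq (R : fieldType) (n : nat) (f : 'rV['F_2]_n -> R) : R :=
  (2 ^+ n)^-1 * \sum_(x : 'rV['F_2]_n) f x ^+ 2.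

(* Subspaces of F_2^n of codimension d, each represented canonically by the
   square matrix <<A>> spanning it (mxalgebra row spaces). *)
Definition codim_subspaces (n d : nat) : {set 'M['F_2]_n} :=
  [set A : 'M['F_2]_n | (<<A>>%MS == A) && (\rank A == n - d)%N].

Definition cosets_of (n : nat) (A : 'M['F_2]_n) : {set {set 'rV['F_2]_n}} :=
  [set [set b : 'rV['F_2]_n | (b - a <= A)%MS] | a : 'rV['F_2]_n].

Definition energy (R : fieldType) (n : nat) (f : 'rV['F_2]_n -> R)
  (C : {set 'rV['F_2]_n}) : R :=
  \sum_(b in C) fourier f b ^+ 2.

Definition top_sum (R : realFieldType) (s : nat) (l : seq R) : R :=
  \sum_(i < s) nth 0 (sort (fun u v : R => v <= u) l) i.

Definition coef_energies (R : realFieldType) (n : nat) (f : 'rV['F_2]_n -> R)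
  : seq R := [seq fourier f a ^+ 2 | a <- enum [set: 'rV['F_2]_n]].

Definition coset_energies (R : realFieldType) (n : nat) (f : 'rV['F_2]_n -> R)
  (A : 'M['F_2]_n) : seq R := [seq energy f C | C <- enum (cosets_of A)].

Definition prob (R : realFieldType) (T : finType) (S : {set T}) (P : pred T) : R :=
  #|[set x in S | P x]|%:R / #|S|%:R.
Arguments prob {R T} S P.

From HB Require Import structures.
From mathcomp Require Import all_boot all_order all_algebra all_fingroup.
From mathcomp Require Import ring lra zify.
Import Order.TTheory GRing.Theory Num.Theory.
Set Implicit Arguments. Unset Strict Implicit. Unset Printing Implicit Defensive.
Local Open Scope ring_scope.

(* Split the energy of each coset C of H into its largest coefficient energy
   (the peak of C) and a residual.  Distinct cosets have distinct peaks, so the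
   sum of the s largest coset energies exceeds the sum of the s largest
   coefficient energies by at most the sum of the s largest residuals, and by
   Cauchy-Schwarz the square of that is at most s X_H, where
   X_H = sum of fhat(b)^2 fhat(b')^2 over the pairs b <> b' with b' - b in H.
   Every nonzero vector lies in the same number of codimension-d subspaces
   (a transvection swaps any two of them), hence in a 2^-d fraction at most;
   with Parseval this gives E[X_H] <= 2^-d ||f||^4 = eps^4 ||f||^4 / (2 s),
   and Markov's inequality bounds Pr[s X_H > (5 eps^2 ||f||^2)^2] by 1/50. *)

Section TopSum.
Variable R : realFieldType.
Implicit Types (l : seq R) (s : nat) (t x y : R).

Definition pos_part x := Num.max x 0.

Lemma pos_part_ge0 x : 0 <= pos_part x.
Proof. by rewrite le_max lexx orbT. Qed.

Lemma le_pos_part x : x <= pos_part x.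
Proof. by rewrite le_max lexx. Qed.

Lemma pos_part_id x : 0 <= x -> pos_part x = x.
Proof. exact: max_l. Qed.

Lemma pos_part_eq0 x : x <= 0 -> pos_part x = 0.
Proof. exact: max_r. Qed.

Lemma pos_partD x y : pos_part (x + y) <= pos_part x + pos_part y.
Proof.
by rewrite ge_max lerD ?le_pos_part // addr_ge0 ?pos_part_ge0.
Qed.

Local Notation sortd l := (sort (fun u v : R => v <= u) l).

Lemma top_sumE s l : top_sum s l = \sum_(0 <= i < s) nth 0 (sortd l) i.
Proof. by rewrite /top_sum big_mkord. Qed.

Lemma sum_sortd (g : R -> R) l m : g 0 = 0 -> (size l <= m)%N ->
  \sum_(x <- l) g x = \sum_(0 <= i < m) g (nth 0 (sortd l) i).
Proof.
move=> g0 lm; have lm' : (size (sortd l) <= m)%N by rewrite size_sort.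
rewrite -(perm_big _ (permEl (perm_sort (fun u v : R => v <= u) l))) (big_nth 0).
rewrite (big_cat_nat (leq0n _) lm') /= [X in _ = _ + X]big1_seq ?addr0 //.
by move=> i /andP[_]; rewrite mem_index_iota => /andP[/(nth_default 0) -> _].
Qed.

Lemma nth_sortd_ge0 l i : all (fun x => 0 <= x) l -> 0 <= nth 0 (sortd l) i.
Proof.
move=> l0; have [ilt|ige] := ltnP i (size (sortd l)); last by rewrite nth_default.
by apply: (allP l0); rewrite -(mem_sort (fun u v : R => v <= u)) mem_nth.
Qed.

Lemma nth_sortd_le l i j : all (fun x => 0 <= x) l -> (i <= j)%N ->
  nth 0 (sortd l) j <= nth 0 (sortd l) i.
Proof.
move=> l0 ij; have [jlt|jge] := ltnP j (size (sortd l)); last first.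
  by rewrite (nth_default 0 jge) nth_sortd_ge0.
have tr : transitive (fun u v : R => v <= u) by move=> y x z xy yz; exact: le_trans yz xy.
have sorted_l : sorted (fun u v : R => v <= u) (sortd l).
  by apply: sort_sorted => x y; exact: le_total.
apply: (sorted_leq_nth tr (fun x => lexx x) 0 sorted_l) => //.
by rewrite inE (leq_ltn_trans ij jlt).
Qed.

Lemma sum_nat_const_mul s t : \sum_(0 <= i < s) t = s%:R * t.
Proof. by rewrite sumr_const_nat subn0 mulr_natl. Qed.

(* For nonnegative l, top_sum s l is the minimum over t >= 0 of
   s t + sum_(x in l) (x - t)^+, attained at the s-th largest entry;
   subadditivity and monotonicity of top_sum follow from this. *)
Lemma top_sum_le_hinge s l t : 0 <= t ->
  top_sum s l <= s%:R * t + \sum_(x <- l) pos_part (x - t).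
Proof.
move=> t0; rewrite top_sumE (sum_sortd _ (leq_addl s _)); last first.
  by rewrite sub0r pos_part_eq0 // oppr_le0.
rewrite (big_cat_nat (leq0n s) (leq_addr _ _)) /= addrA -[X in X <= _]addr0.
apply: lerD; last by apply: sumr_ge0 => i _; exact: pos_part_ge0.
rewrite -sum_nat_const_mul -big_split /=.
by apply: ler_sum_nat => i _; rewrite -lerBlDl le_pos_part.
Qed.

Lemma top_sum_hinge s l : all (fun x => 0 <= x) l ->
  exists2 t, 0 <= t & top_sum s l = s%:R * t + \sum_(x <- l) pos_part (x - t).
Proof.
move=> l0; set u := nth 0 (sortd l).
exists (u s); first exact: nth_sortd_ge0.
rewrite top_sumE (sum_sortd _ (leq_addl s _)); last first.
  by rewrite sub0r pos_part_eq0 // oppr_le0 nth_sortd_ge0.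
rewrite (big_cat_nat (leq0n s) (leq_addr _ _)) /= [X in _ + (_ + X)]big1_seq.
  rewrite addr0 -sum_nat_const_mul -big_split /=.
  apply: eq_big_nat => i /andP[_ /ltnW si].
  by rewrite pos_part_id ?subr_ge0 ?nth_sortd_le // addrC subrK.
move=> i /andP[_]; rewrite mem_index_iota => /andP[si _].
by rewrite pos_part_eq0 // subr_le0 nth_sortd_le.
Qed.

Lemma top_sum_ge0 s l : all (fun x => 0 <= x) l -> 0 <= top_sum s l.
Proof.
case/(top_sum_hinge s) => t t0 ->.
by rewrite addr_ge0 ?mulr_ge0 ?sumr_ge0 // => x _; exact: pos_part_ge0.
Qed.

Lemma top_sumD (I : eqType) (r : seq I) (F G : I -> R) s :
  {in r, forall i, 0 <= F i} -> {in r, forall i, 0 <= G i} ->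
  top_sum s [seq F i + G i | i <- r] <= top_sum s (map F r) + top_sum s (map G r).
Proof.
move=> F0 G0.
have /(top_sum_hinge s)[tF tF0 ->] : all (fun x => 0 <= x) (map F r).
  by apply/allP => _ /mapP[i ri ->]; exact: F0.
have /(top_sum_hinge s)[tG tG0 ->] : all (fun x => 0 <= x) (map G r).
  by apply/allP => _ /mapP[i ri ->]; exact: G0.
apply: le_trans (top_sum_le_hinge _ _ (addr_ge0 tF0 tG0)) _.
rewrite !big_map mulrDr addrACA lerD2l -big_split /= ler_sum // => i _.
by rewrite opprD addrACA pos_partD.
Qed.

Lemma top_sum_uniq_le (T : finType) (F : T -> R) (r : seq T) s :
  uniq r -> (forall a, 0 <= F a) ->
  top_sum s (map F r) <= top_sum s [seq F a | a <- enum [set: T]].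
Proof.
move=> r_uniq F0.
have /(top_sum_hinge s)[t t0 ->] : all (fun x => 0 <= x) [seq F a | a <- enum [set: T]].
  by apply/allP => _ /mapP[a _ ->].
apply: le_trans (top_sum_le_hinge _ _ t0) _.
rewrite lerD2l !big_map big_uniq // big_enum /= [X in _ <= X](bigID (mem r)) /=.
under [X in _ <= X + _]eq_bigl do rewrite in_setT.
by rewrite lerDl sumr_ge0 // => a _; exact: pos_part_ge0.
Qed.

Lemma sqr_sum_le (I : finType) (a : I -> R) :
  (\sum_i a i) ^+ 2 <= #|I|%:R * \sum_i a i ^+ 2.
Proof.
have row_sum i : \sum_j (a i - a j) ^+ 2 =
    #|I|%:R * a i ^+ 2 + \sum_j a j ^+ 2 - 2 * (a i * \sum_j a j).
  transitivity (\sum_j (a i ^+ 2 + a j ^+ 2 - 2 * (a i * a j))).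
    by apply: eq_bigr => j _; ring.
  by rewrite sumrB big_split sumr_const -!mulr_sumr mulr_natl.
have : 0 <= \sum_i \sum_j (a i - a j) ^+ 2.
  by apply: sumr_ge0 => i _; apply: sumr_ge0 => j _; exact: sqr_ge0.
rewrite (eq_bigr _ (fun i _ => row_sum i)) sumrB big_split /= sumr_const.
rewrite -mulr_sumr -mulr_sumr -mulr_suml -expr2 mulr_natl.
set S := \sum_i a i; set Q := \sum_i a i ^+ 2.
rewrite (_ : _ + _ - _ = 2 * (#|I|%:R * Q - S ^+ 2)); last by ring.
by rewrite pmulr_rge0 // subr_ge0 mulr_natl.
Qed.

Lemma top_sum_sqr_le s l : top_sum s l ^+ 2 <= s%:R * \sum_(x <- l) x ^+ 2.
Proof.
apply: le_trans (sqr_sum_le _) _; rewrite card_ord ler_wpM2l //.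
rewrite (@sum_sortd (fun x => x ^+ 2) _ _ (expr0n _ _) (leq_addl s _)).
rewrite (big_cat_nat (leq0n s) (leq_addr _ _)) /= big_mkord lerDl.
by apply: sumr_ge0 => i _; exact: sqr_ge0.
Qed.
End TopSum.

Lemma F2_cases (u : 'F_2) : u = 0 \/ u = 1.
Proof. by case: u => [[|[|]]] //= ?; [left|right]; apply: val_inj. Qed.

Lemma row_neq0P n (F : nzRingType) (x : 'rV[F]_n) : reflect (exists i, x 0 i != 0) (x != 0).
Proof.
apply: (iffP idP) => [x0|[i]]; last by apply: contraNneq => ->; rewrite mxE.
apply/existsP; rewrite -negb_forall; apply: contra x0 => /forallP x0.
by apply/eqP/rowP => j; rewrite mxE; exact/eqP/x0.
Qed.

Section Characters.
Variable n : nat.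
Implicit Types (a b x y : 'rV['F_2]_n).

Lemma dotF2Dl a b x : dotF2 (a + b) x = dotF2 a x + dotF2 b x.
Proof. by rewrite /dotF2 mulmxDl mxE. Qed.

Lemma dotF2Bl a b x : dotF2 (a - b) x = dotF2 a x - dotF2 b x.
Proof. by rewrite /dotF2 mulmxBl !mxE. Qed.

Lemma dotF2Dr a x y : dotF2 a (x + y) = dotF2 a x + dotF2 a y.
Proof. by rewrite /dotF2 linearD mulmxDr mxE. Qed.

Lemma dotF2Br a x y : dotF2 a (x - y) = dotF2 a x - dotF2 a y.
Proof. by rewrite /dotF2 linearB mulmxBr !mxE. Qed.

Lemma dotF2_delta a i : dotF2 a (delta_mx 0 i) = a 0 i.
Proof. by rewrite /dotF2 trmx_delta -colE mxE. Qed.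

Lemma chrM (R : nzRingType) a x y : chr R a x * chr R a y = chr R a (x - y).
Proof.
rewrite /chr dotF2Br.
by case: (F2_cases (dotF2 a x)) => ->; case: (F2_cases (dotF2 a y)) => ->;
  rewrite /= ?mulrNN ?mulr1 ?mul1r.
Qed.

Variable R : numFieldType.

Lemma sum_chr x : \sum_a chr R a x = if x == 0 then 2 ^+ n else 0.
Proof.
have [->|/row_neq0P[i xi]] := eqVneq.
  under eq_bigr do rewrite /chr /dotF2 trmx0 mulmx0 mxE eqxx.
  by rewrite sumr_const card_mx card_Fp // mul1n -natrX -mulr_natl mulr1.
pose e : 'rV['F_2]_n := delta_mx 0 i.
have chr_flip a : chr R (a + e) x = - chr R a x.
  rewrite /chr dotF2Dl (_ : dotF2 e x = 1); last first.
    by rewrite /dotF2 /e -rowE mxE mxE; case: (F2_cases (x 0 i)) xi => ->.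
  by case: (F2_cases (dotF2 a x)) => ->; rewrite ?opprK.
have : \sum_a chr R a x = - \sum_a chr R a x.
  by rewrite {1}(reindex_inj (addIr e)) /= -sumrN; apply: eq_bigr => a _; rewrite chr_flip.
by move/eqP; rewrite -addr_eq0 -mulr2n -mulr_natr mulf_eq0 pnatr_eq0 orbF => /eqP.
Qed.

Lemma parseval (f : 'rV['F_2]_n -> R) : \sum_a fourier f a ^+ 2 = norm2sq f.
Proof.
have n0 : (2 ^+ n : R) != 0 by rewrite expf_neq0 // pnatr_eq0.
rewrite /fourier /norm2sq.
transitivity ((2 ^+ n)^-1 ^+ 2 * \sum_a \sum_x \sum_y f x * f y * (chr R a x * chr R a y)).
  rewrite mulr_sumr; apply: eq_bigr => a _; rewrite exprMn [X in _ * X]expr2 mulr_suml.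
  congr (_ * _); apply: eq_bigr => x _; rewrite mulr_sumr.
  by apply: eq_bigr => y _; ring.
transitivity ((2 ^+ n)^-1 ^+ 2 * \sum_x \sum_y f x * f y * \sum_a chr R a (x - y)).
  congr (_ * _); rewrite exchange_big; apply: eq_bigr => x _.
  rewrite exchange_big; apply: eq_bigr => y _; rewrite mulr_sumr.
  by apply: eq_bigr => a _; rewrite chrM.
have diagonal x : \sum_y f x * f y * \sum_a chr R a (x - y) = f x ^+ 2 * 2 ^+ n.
  rewrite (bigD1 x) //= sum_chr subrr eqxx big1 ?addr0 ?expr2 // => y yx.
  by rewrite sum_chr subr_eq0 eq_sym (negbTE yx) mulr0.
rewrite (eq_bigr _ (fun x _ => diagonal x)) -mulr_suml.
by field.
Qed.
End Characters.

Section Cosets.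
Variable n : nat.
Implicit Types (A : 'M['F_2]_n) (a b x y : 'rV['F_2]_n) (C : {set 'rV['F_2]_n}).

Definition mxcoset A a : {set 'rV['F_2]_n} := [set b | (b - a <= A)%MS].

Lemma subrmx_sub A x y : (x <= A)%MS -> (y <= A)%MS -> (x - y <= A)%MS.
Proof. by move=> xA yA; rewrite addmx_sub // eqmx_opp. Qed.

Lemma mxcoset_refl A a : a \in mxcoset A a.
Proof. by rewrite inE subrr sub0mx. Qed.

Lemma mxcoset_in A a : mxcoset A a \in cosets_of A.
Proof. exact: imset_f. Qed.

Lemma cosets_ofP A C b : C \in cosets_of A -> b \in C -> C = mxcoset A b.
Proof.
case/imsetP => a _ -> /[!inE] ba; apply/setP => x; rewrite !inE.
apply/idP/idP => [xa|xb].
  have -> : x - b = (x - a) - (b - a) by rewrite opprB addrA subrK.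
  exact: subrmx_sub.
have -> : x - a = (x - b) + (b - a) by rewrite addrA subrK.
exact: addmx_sub.
Qed.

Lemma cosets_of_neq0 A C : C \in cosets_of A -> C != set0.
Proof. by case/imsetP => a _ ->; apply/set0Pn; exists a; exact: mxcoset_refl. Qed.

End Cosets.

Section CosetEnergy.
Variables (R : realFieldType) (n : nat) (f : 'rV['F_2]_n -> R).
Implicit Types (A : 'M['F_2]_n) (b : 'rV['F_2]_n) (C : {set 'rV['F_2]_n}).
Local Notation e b := (fourier f b ^+ 2).

Definition peak C := [arg max_(b > odflt 0 [pick b in C] in C) e b]%O.

Lemma peakP C : C != set0 -> peak C \in C /\ {in C, forall b, e b <= e (peak C)}.
Proof.
move=> /set0Pn C0; have pickC : odflt 0 [pick b in C] \in C.
  by case: pickP => [b //|C0']; case: C0 => b; rewrite C0'.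
by rewrite /peak; case: arg_maxP.
Qed.

Definition residual C := energy f C - e (peak C).

Lemma residualE C : C != set0 -> residual C = \sum_(b in C | b != peak C) e b.
Proof. by case/peakP => pC _; rewrite /residual /energy (bigD1 (peak C)) //= addrC addrK. Qed.

Lemma residual_ge0 C : C != set0 -> 0 <= residual C.
Proof. by move/residualE ->; apply: sumr_ge0 => b _; exact: sqr_ge0. Qed.

Definition cross_energy C := \sum_(b in C) \sum_(b' in C | b' != b) e b * e b'.

Lemma sqr_residual_le C : C != set0 -> residual C ^+ 2 <= cross_energy C.
Proof.
move=> C0; have [pC peak_max] := peakP C0.
rewrite [X in X ^+ 2]residualE // expr2 mulr_suml /cross_energy [X in _ <= X](bigD1 (peak C)) //=.
rewrite -[X in X <= _]add0r; apply: lerD.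
  by apply: sumr_ge0 => b' _; rewrite mulr_ge0 ?sqr_ge0.
apply: ler_sum => b /andP[bC _]; rewrite -mulr_sumr ler_wpM2l ?sqr_ge0 // -residualE //.
have -> : \sum_(b' in C | b' != b) e b' = energy f C - e b.
  by rewrite /energy [in RHS](bigD1 b) //= addrC addrK.
by rewrite lerB ?peak_max.
Qed.

Definition collision_energy A :=
  \sum_b \sum_b' (if (b' != b) && (b' - b <= A)%MS then e b * e b' else 0).

Lemma collision_energy_ge0 A : 0 <= collision_energy A.
Proof.
apply: sumr_ge0 => b _; apply: sumr_ge0 => b' _.
by case: ifP; rewrite // mulr_ge0 ?sqr_ge0.
Qed.

Lemma sum_cross_energy A :
  \sum_(C in cosets_of A) cross_energy C = collision_energy A.
Proof.
rewrite /cross_energy; under eq_bigr do rewrite big_mkcond /=.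
rewrite exchange_big; apply: eq_bigr => b _ /=.
rewrite -big_mkcondr (big_pred1 (mxcoset A b)) => [|C]; last first.
  apply/andP/eqP => [[CA bC]|->]; first exact: cosets_ofP.
  by rewrite mxcoset_in mxcoset_refl.
rewrite big_mkcond; apply: eq_bigr => b' _; rewrite inE andbC.
by case: ifP.
Qed.

Lemma peak_inj A : {in cosets_of A &, injective peak}.
Proof.
move=> C1 C2 C1A C2A eq12.
have [p1 _] := peakP (cosets_of_neq0 C1A); have [p2 _] := peakP (cosets_of_neq0 C2A).
by rewrite (cosets_ofP C1A p1) (cosets_ofP C2A p2) eq12.
Qed.

Lemma top_coset_energies_le A s :
  top_sum s (coset_energies f A) - top_sum s (coef_energies f)
    <= top_sum s [seq residual C | C <- enum (cosets_of A)].
Proof.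
set r := enum (cosets_of A).
have r0 : {in r, forall C, C != set0} by move=> C; rewrite mem_enum; exact: cosets_of_neq0.
have -> : coset_energies f A = [seq e (peak C) + residual C | C <- r].
  by apply/eq_map => C; rewrite /residual addrC subrK.
rewrite lerBlDl; apply: le_trans (top_sumD _ _ _) _ => [C _|C /r0|]; first exact: sqr_ge0.
  exact: residual_ge0.
rewrite lerD2r (map_comp (fun b => e b) peak).
apply: top_sum_uniq_le => [|b]; last exact: sqr_ge0.
by rewrite map_inj_in_uniq ?enum_uniq // => C1 C2; rewrite !mem_enum; exact: peak_inj.
Qed.

Lemma sqr_top_residual_le A s :
  top_sum s [seq residual C | C <- enum (cosets_of A)] ^+ 2 <= s%:R * collision_energy A.
Proof.
apply: le_trans (top_sum_sqr_le _ _) _; rewrite ler_wpM2l // -sum_cross_energy.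
rewrite big_map big_enum /= ler_sum // => C CA.
exact: sqr_residual_le (cosets_of_neq0 CA).
Qed.

Lemma coset_excess_le A s K : 0 <= K -> s%:R * collision_energy A <= K ^+ 2 ->
  top_sum s (coset_energies f A) - top_sum s (coef_energies f) <= K.
Proof.
move=> K0 collK; apply: le_trans (top_coset_energies_le A s) _.
have top0 : 0 <= top_sum s [seq residual C | C <- enum (cosets_of A)].
  apply/top_sum_ge0/allP => _ /mapP[C + ->]; rewrite mem_enum.
  by move/cosets_of_neq0; exact: residual_ge0.
by rewrite -ler_sqr ?nnegrE // (le_trans (sqr_top_residual_le A s)).
Qed.

End CosetEnergy.

Lemma card_rowspace (F : finFieldType) m n (A : 'M[F]_(m, n)) :
  #|[set v : 'rV[F]_n | (v <= A)%MS]| = (#|F| ^ \rank A)%N.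
Proof.
have coord_inj : injective (fun x : 'rV_(\rank A) => x *m row_base A).
  exact/row_free_inj/row_base_free.
have -> : [set v : 'rV[F]_n | (v <= A)%MS] = (fun x => x *m row_base A) @: setT.
  apply/setP => v; rewrite inE -(eq_row_base A); apply/idP/imsetP.
    by case/submxP => x ->; exists x.
  by case=> x _ ->; exact: submxMl.
by rewrite card_imset // cardsT card_mx mul1n.
Qed.

Lemma mxF2_addrr m p (M : 'M['F_2]_(m, p)) : M + M = 0.
Proof.
apply/matrixP => i j; rewrite !mxE.
by case: (F2_cases (M i j)) => ->; rewrite ?addr0 //; apply/eqP.
Qed.

Section RandomSubspace.
Variable n : nat.
Implicit Types (A : 'M['F_2]_n) (u v w z : 'rV['F_2]_n).

Lemma exists_dotF2_eq1 v w : v != 0 -> w != 0 ->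
  exists u, dotF2 v u = 1 /\ dotF2 w u = 1.
Proof.
have F2_neq0 (x : 'F_2) : x != 0 -> x = 1 by case: (F2_cases x) => ->.
move=> /row_neq0P[i /F2_neq0 vi] /row_neq0P[j /F2_neq0 wj].
case: (F2_cases (w 0 i)) => wi; last by exists (delta_mx 0 i); rewrite !dotF2_delta.
case: (F2_cases (v 0 j)) => vj; last by exists (delta_mx 0 j); rewrite !dotF2_delta.
exists (delta_mx 0 i + delta_mx 0 j).
by rewrite !dotF2Dr !dotF2_delta vi wj vj wi add0r addr0.
Qed.

Definition transvection u z : 'M['F_2]_n := 1%:M + u^T *m z.

Lemma mulmx_transvection v u z : v *m transvection u z = v + dotF2 v u *: z.
Proof. by rewrite mulmxDr mulmx1 mulmxA [v *m u^T]mx11_scalar mul_scalar_mx. Qed.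

Lemma transvectionK u z : dotF2 z u = 0 ->
  transvection u z *m transvection u z = 1%:M.
Proof.
move=> zu; have square0 : u^T *m z *m (u^T *m z) = 0.
  rewrite -mulmxA (mulmxA z) [z *m u^T]mx11_scalar (zu : (z *m u^T) 0 0 = 0).
  by rewrite mul_scalar_mx scale0r mulmx0.
rewrite /transvection mulmxDl !mulmxDr !mul1mx mulmx1 square0 addr0.
by rewrite -addrA mxF2_addrr addr0.
Qed.

Definition subspaces_containing d v := [set A in codim_subspaces n d | (v <= A)%MS].

Lemma card_subspaces_containing_eq d v w : v != 0 -> w != 0 ->
  #|subspaces_containing d v| = #|subspaces_containing d w|.
Proof.
move=> v0 w0; have [u [vu wu]] := exists_dotF2_eq1 v0 w0.
set g := transvection u (w - v).
have gK : g *m g = 1%:M by apply: transvectionK; rewrite dotF2Bl vu wu subrr.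
have g_free : row_free g by rewrite row_free_unit; exact: (mulmx1_unit gK).1.
have vg : v *m g = w by rewrite mulmx_transvection vu scale1r addrC subrK.
pose phi A := (<<A *m g>>%MS : 'M_n).
have phi_codim A : A \in codim_subspaces n d -> phi A \in codim_subspaces n d.
  by rewrite !inE /phi genmx_id eqxx genmxE mxrankMfree // => /andP[].
have phiK : {in codim_subspaces n d, involutive phi}.
  move=> A; rewrite inE => /andP[/eqP genA _]; rewrite /phi -{2}genA; apply: eq_genmx.
  by apply: eqmx_trans (eqmxMr g (genmxE _)) _; rewrite -mulmxA gK mulmx1.
have phi_contains A : (w <= phi A)%MS = (v <= A)%MS by rewrite genmxE -vg submxMfree.
have -> : subspaces_containing d w = phi @: subspaces_containing d v.
  apply/setP => B; rewrite inE; apply/andP/imsetP => [[BS wB]|[A + ->]].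
    by exists (phi B); rewrite ?phiK // inE phi_codim //= -phi_contains phiK.
  by rewrite inE => /andP[AS vA]; rewrite phi_codim ?phi_contains.
rewrite card_in_imset // => A1 A2 /[1!inE] /andP[A1S _] /[1!inE] /andP[A2S _] eq_phi.
by rewrite -(phiK A1) // eq_phi phiK.
Qed.

Lemma sum_card_subspaces_containing d :
  (\sum_v #|subspaces_containing d v| = #|codim_subspaces n d| * 2 ^ (n - d))%N.
Proof.
transitivity (\sum_(A in codim_subspaces n d) \sum_(v : 'rV['F_2]_n) ((v <= A)%MS : nat))%N.
  rewrite exchange_big; apply: eq_bigr => v _.
  rewrite -sum1_card big_mkcond [RHS]big_mkcond; apply: eq_bigr => A _.
  by rewrite inE; case: (A \in _); case: (v <= A)%MS.
rewrite -sum_nat_const; apply: eq_bigr => A /[1!inE] /andP[_ /eqP <-].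
have -> : (2 ^ \rank A = #|'F_2| ^ \rank A)%N by rewrite card_Fp.
rewrite -card_rowspace -sum1_card [RHS]big_mkcond /=.
by apply: eq_bigr => v _; rewrite inE; case: (v <= A)%MS.
Qed.

Lemma card_subspaces_containing_le d v : (d <= n)%N -> v != 0 ->
  (#|subspaces_containing d v| * 2 ^ d <= #|codim_subspaces n d|)%N.
Proof.
move=> dn v0; have := sum_card_subspaces_containing d.
rewrite (bigD1 0) //=; under eq_bigr => w w0 do rewrite (card_subspaces_containing_eq d w0 v0).
rewrite sum_nat_const cardC1 card_mx card_Fp // mul1n.
have -> : #|subspaces_containing d 0| = #|codim_subspaces n d|.
  by apply: eq_card => A; rewrite !inE sub0mx andbT.
have : (#|subspaces_containing d v| <= #|codim_subspaces n d|)%N.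
  by apply: subset_leq_card; apply/subsetP => A /[1!inE] /andP[].
have -> : (2 ^ n = 2 ^ (n - d) * 2 ^ d)%N by rewrite -expnD subnK.
have := expn_gt0 2 d; have := expn_gt0 2 (n - d).
move: (2 ^ d)%N (2 ^ (n - d))%N #|subspaces_containing _ _| #|codim_subspaces _ _|.
nia.
Qed.

Lemma codim_subspaces_neq0 d : (d <= n)%N -> (0 < #|codim_subspaces n d|)%N.
Proof.
move=> dn; apply/card_gt0P; exists <<(pid_mx (n - d) : 'M['F_2]_n)>>%MS.
by rewrite inE genmx_id mxrank_gen rank_pid_mx ?leq_subr ?eqxx.
Qed.

End RandomSubspace.

Lemma sum_collision_energy_le (R : realFieldType) n (f : 'rV['F_2]_n -> R) d :
  (d <= n)%N ->
  (2 ^ d)%:R * \sum_(A in codim_subspaces n d) collision_energy f A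
    <= #|codim_subspaces n d|%:R * norm2sq f ^+ 2.
Proof.
move=> dn; rewrite -parseval expr2 mulr_suml mulr_sumr exchange_big /= mulr_sumr.
apply: ler_sum => b _; rewrite exchange_big /= mulr_sumr.
rewrite [in X in _ <= X]mulr_sumr [in X in _ <= X]mulr_sumr.
apply: ler_sum => b' _; rewrite -big_mkcondr /=.
have ee0 : 0 <= fourier f b ^+ 2 * fourier f b' ^+ 2 by rewrite mulr_ge0 ?sqr_ge0.
have [->|b'b] := eqVneq b' b.
  rewrite big_pred0 => [|A]; last by rewrite /= andbF.
  by rewrite mulr0 mulr_ge0 // mulr_ge0 ?sqr_ge0.
rewrite (eq_bigl (mem (subspaces_containing d (b' - b)))) => [|A]; last by rewrite !inE.
set E := _ * _ in ee0 *.
rewrite sumr_const -(mulr_natr E) mulrCA [X in _ <= X]mulrC ler_wpM2l // -natrM.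
by rewrite ler_nat mulnC card_subspaces_containing_le // subr_eq0.
Qed.

Lemma markov_count (R : realFieldType) (T : finType) (S : {set T}) (g : T -> R) c m :
  0 <= c -> 0 <= m -> {in S, forall x, 0 <= g x} ->
  \sum_(x in S) g x <= c * m -> #|[set x in S | c < g x]|%:R <= m.
Proof.
move=> c0 m0 g0 sum_le; set B := [set x in S | c < g x].
have [->|/set0Pn[x0 x0B]] := eqVneq B set0; first by rewrite cards0.
have : c * #|B|%:R < c * m.
  apply: lt_le_trans sum_le; rewrite [X in _ < X](bigID (fun x => c < g x)) /=.
  rewrite -[X in X < _]addr0 ltr_leD ?sumr_ge0 // => [|x /andP[/g0]//].
  rewrite mulrC mulr_natl -sumr_const (eq_bigl (mem B)) => [|x]; last by rewrite !inE.
  apply: ltr_sum => [|x]; last by rewrite inE => /andP[].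
  by apply/hasP; exists x0; rewrite ?mem_index_enum.
nra.
Qed.

Lemma prob_compl_le {R : realFieldType} (T : finType) (S : {set T}) (P Q : pred T) :
  (0 < #|S|)%N -> {in S, forall x, ~~ P x -> Q x} -> 1 - prob S Q <= prob S P :> R.
Proof.
move=> S0 PQ; rewrite /prob lerBlDr -mulrDl ler_pdivlMr ?ltr0n // mul1r -natrD ler_nat.
rewrite -[X in (X <= _)%N](cardsID [set x | P x] S) leq_add //.
  by apply: subset_leq_card; apply/subsetP => x; rewrite !inE andbC.
apply: subset_leq_card; apply/subsetP => x; rewrite !inE => /andP[nPx xS].
by rewrite xS PQ.
Qed.

Lemma card_large_collision_energy (R : realFieldType) n (f : 'rV['F_2]_n -> R)
    s d (eps : R) :
  0 < eps -> (2 ^ d)%:R = 2 * s%:R / eps ^+ 4 -> (d <= n)%N ->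
  #|[set A in codim_subspaces n d |
      (5 * eps ^+ 2 * norm2sq f) ^+ 2 < s%:R * collision_energy f A]|%:R
    <= #|codim_subspaces n d|%:R / 50 :> R.
Proof.
move=> eps0 two_d dn; apply: markov_count; [exact: sqr_ge0 | by rewrite divr_ge0 | | ].
  by move=> A _; rewrite mulr_ge0 ?collision_energy_ge0.
have -> : s%:R = eps ^+ 4 / 2 * (2 ^ d)%:R by rewrite two_d; field; rewrite gt_eqF.
rewrite -mulr_sumr -mulrA [X in _ <= X](_ : _ = eps ^+ 4 / 2 *
    (#|codim_subspaces n d|%:R * norm2sq f ^+ 2)); last by field.
by apply: ler_wpM2l; [rewrite divr_ge0 ?exprn_ge0 ?ltW | exact: sum_collision_energy_le].
Qed.

Unset Implicit Arguments.

Theorem corollary3p3 (R : realFieldType) (n : nat) (f : 'rV['F_2]_n -> R)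
  (s d : nat) (eps : R) :
  (1 <= s)%N -> 0 < eps -> eps <= 1 / 2 ->
  (2 ^ d)%:R = 2 * s%:R / eps ^+ 4 ->
  (d <= n)%N ->
  prob (codim_subspaces n d)
    (fun A => top_sum s (coset_energies f A) - top_sum s (coef_energies f)
              <= 5 * eps ^+ 2 * norm2sq f)
  >= 15 / 16 :> R.
Proof.
move=> _ eps0 _ two_d dn.
have W0 : 0 <= norm2sq f by rewrite -parseval sumr_ge0 // => a _; exact: sqr_ge0.
set K := 5 * eps ^+ 2 * norm2sq f.
have K0 : 0 <= K by rewrite /K mulr_ge0 // mulr_ge0 // sqr_ge0.
set P := (fun A => _ <= _); set Q := (fun A => K ^+ 2 < s%:R * collision_energy f A).
have fail_Q : {in codim_subspaces n d, forall A, ~~ P A -> Q A}.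
  by move=> A _; rewrite /Q ltNge; apply: contra; exact: coset_excess_le.
apply: le_trans _ (prob_compl_le (codim_subspaces_neq0 dn) fail_Q).
have := card_large_collision_energy f eps0 two_d dn; rewrite -/K /prob.
rewrite [X in _ <= X]mulrC -ler_pdivrMr ?ltr0n ?codim_subspaces_neq0 // => Q_rare.
apply: le_trans (lerB (lexx 1) Q_rare).
lra.
Qed.
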